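(* Let $\mathcal A\subset\mathbb R^d$ be a finite nonempty set, $\mathcal D=\mathrm{conv}(\mathcal A)$, and let $f$ be convex and differentiable on an open set containing the Minkowski set $\mathcal D+\mathcal D-\mathcal D=\{x+s-v: x,s,v\in\mathcal D\}$, with $C_f^{A}<\infty$. Run the away-steps Frank-Wolfe algorithm (AFW) described in the context, and let $h_t:=f(x^{(t)})-\min_{x\in\mathcal D}f(x)$. Then: (i) at every good step $t$ (i.e. $\gamma_t<\gamma_{\max}$) one has $h_{t+1}\le(1-\rho_f)h_t$ with $\rho_f:=\mu_f^{A}/(4C_f^{A})$, and $h_{t+1}\le h_t$ at every step; (ii) the number of drop steps (away steps with $\gamma_t=\gamma_{\max}$) among iterations $0,\dots,t-1$ is at most $t/2$; (iii) consequently $h_t\le h_0\exp(-\tfrac12\rho_f t)$ for all $t\ge 0$; (iv) if only $\mu_f^{A}\ge 0$ is known (general convex case), then $h_t\le \frac{4C}{k(t)+4}$ with $C=2C_f^{A}+h_0$, where $k(t)\ge t/2$ is the number of steps among iterations $0,\dots,t-1$ that are not drop steps.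
   Context: All norms and inner products are Euclidean. For $x\in\mathcal D$, let $\mathcal S_x$ be the family of subsets $S\subseteq\mathcal A$ such that $x$ is a proper convex combination of all elements of $S$ (i.e. $x=\sum_{v\in S}\alpha_v v$ with all $\alpha_v>0$, $\sum\alpha_v=1$). Curvature constant: $C_f^{A}:=\sup\{\frac{2}{\gamma^2}(f(y)-f(x)-\gamma\langle\nabla f(x),s-v\rangle): x,s,v\in\mathcal D,\ \gamma\in(0,1],\ y=x+\gamma(s-v)\}$. Geometric strong convexity: for $x\in\mathcal D$ let $s_f(x)\in\arg\min_{a\in\mathcal A}\langle\nabla f(x),a\rangle$; for $S\in\mathcal S_x$ let $v_S(x)\in\arg\max_{v\in S}\langle\nabla f(x),v\rangle$; let $v_f(x)$ be an element of $\{v_S(x):S\in\mathcal S_x\}$ minimizing $\langle\nabla f(x),\cdot\rangle$. For $x,x^*\in\mathcal D$ with $\langle\nabla f(x),x^*-x\rangle<0$ put $\gamma^{A}(x,x^* ):=\frac{\langle-\nabla f(x),x^*-x\rangle}{\langle-\nabla f(x),s_f(x)-v_f(x)\rangle}$, and $\mu_f^{A}:=\inf_{x\in\mathcal D}\inf_{x^*\in\mathcal D:\langle\nabla f(x),x^*-x\rangle<0}\frac{2}{\gamma^{A}(x,x^* )^2}\big(f(x^* )-f(x)-\langle\nabla f(x),x^*-x\rangle\big)$. AFW algorithm: start with $x^{(0)}\in\mathcal A$, $S^{(0)}=\{x^{(0)}\}$, weight $\alpha^{(0)}_{x^{(0)}}=1$. At iteration $t$, $x^{(t)}=\sum_{v\in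 S^{(t)}}\alpha^{(t)}_v v$ with $\alpha^{(t)}_v>0$ summing to 1. Let $s_t\in\arg\min_{a\in\mathcal A}\langle\nabla f(x^{(t)}),a\rangle$, $d^{FW}_t=s_t-x^{(t)}$, $v_t\in\arg\max_{v\in S^{(t)}}\langle\nabla f(x^{(t)}),v\rangle$, $d^{A}_t=x^{(t)}-v_t$. If $\langle-\nabla f(x^{(t)}),d^{FW}_t\rangle\ge\langle-\nabla f(x^{(t)}),d^{A}_t\rangle$ take $d_t=d^{FW}_t$, $\gamma_{\max}=1$ (FW step); otherwise $d_t=d^{A}_t$, $\gamma_{\max}=\alpha^{(t)}_{v_t}/(1-\alpha^{(t)}_{v_t})$ (away step). Let $\gamma_t\in\arg\min_{\gamma\in[0,\gamma_{\max}]}f(x^{(t)}+\gamma d_t)$ and $x^{(t+1)}=x^{(t)}+\gamma_t d_t$. Weights: for a FW step $\alpha^{(t+1)}_{s_t}=(1-\gamma_t)\alpha^{(t)}_{s_t}+\gamma_t$ and $\alpha^{(t+1)}_v=(1-\gamma_t)\alpha^{(t)}_v$ for $v\ne s_t$; for an away step $\alpha^{(t+1)}_{v_t}=(1+\gamma_t)\alpha^{(t)}_{v_t}-\gamma_t$ and $\alpha^{(t+1)}_v=(1+\gamma_t)\alpha^{(t)}_v$ for $v\neq v_t$ (weights of atoms not previously active are $0$). $S^{(t+1)}=\{v\in\mathcal A:\alpha^{(t+1)}_v>0\}$. A step is good if $\gamma_t<\gamma_{\max}$. *)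

(* classical real numbers.  Vectors of R^d are represented as
   functions nat -> R whose coordinates >= d vanish (predicate in_Rd). *)
From Stdlib Require Import Reals Lra Lia Arith.
Open Scope R_scope.

Definition vec := nat -> R.
Definition vadd (x y : vec) : vec := fun i => x i + y i.
Definition vsub (x y : vec) : vec := fun i => x i - y i.
Definition vscal (c : R) (x : vec) : vec := fun i => c * x i.

Fixpoint sumR (n : nat) (F : nat -> R) : R :=
  match n with O => 0 | S k => sumR k F + F k end.

Fixpoint countN (n : nat) (P : nat -> bool) : nat :=
  match n with O => O | S k => (countN k P + (if P k then 1 else 0))%nat end.

Definition in_Rd (d : nat) (x : vec) : Prop := forall i, (d <= i)%nat -> x i = 0.
Definition ip (d : nat) (x y : vec) : R := sumR d (fun i => x i * y i).
Definition norm (d : nat) (x : vec) : R := sqrt (ip d x x).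

(* The atom set A = {a 0, ..., a (m-1)} (distinct points of R^d). *)
Definition lincomb (m : nat) (lam : nat -> R) (a : nat -> vec) : vec :=
  fun j => sumR m (fun i => lam i * a i j).

Definition in_conv (m : nat) (a : nat -> vec) (x : vec) : Prop :=
  exists lam : nat -> R, (forall i, (i < m)%nat -> 0 <= lam i) /\
    sumR m lam = 1 /\ x = lincomb m lam a.

Definition in_mink (m : nat) (a : nat -> vec) (y : vec) : Prop :=
  exists x s v, in_conv m a x /\ in_conv m a s /\ in_conv m a v /\
    y = vadd x (vsub s v).

Definition is_open (d : nat) (U : vec -> Prop) : Prop :=
  forall x, U x -> in_Rd d x /\
    exists r, 0 < r /\ forall y, in_Rd d y -> norm d (vsub y x) < r -> U y.

Definition has_grad (d : nat) (f : vec -> R) (x g : vec) : Prop :=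
  in_Rd d g /\
  forall eps, 0 < eps -> exists delta, 0 < delta /\
    forall y, in_Rd d y -> norm d (vsub y x) < delta ->
      Rabs (f y - f x - ip d g (vsub y x)) <= eps * norm d (vsub y x).

Definition convex_on (U : vec -> Prop) (f : vec -> R) : Prop :=
  forall x y l, U x -> U y -> 0 <= l <= 1 ->
    U (vadd (vscal l x) (vscal (1 - l) y)) ->
    f (vadd (vscal l x) (vscal (1 - l) y)) <= l * f x + (1 - l) * f y.

Definition is_inf (E : R -> Prop) (c : R) : Prop :=
  (forall r, E r -> c <= r) /\ (forall b, (forall r, E r -> b <= r) -> b <= c).

(* elements of the set whose sup is C_f^A *)
Definition curv_set (d m : nat) (a : nat -> vec) (f : vec -> R) (grad : vec -> vec)
  (r : R) : Prop :=
  exists x s v gam, in_conv m a x /\ in_conv m a s /\ in_conv m a v /\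
    0 < gam <= 1 /\
    r = 2 / (gam ^ 2) *
        (f (vadd x (vscal gam (vsub s v))) - f x - gam * ip d (grad x) (vsub s v)).

(* S in S_x ; S is a subset of indices of atoms, given as a boolean predicate *)
Definition in_Sx (m : nat) (a : nat -> vec) (x : vec) (S : nat -> bool) : Prop :=
  (forall i, S i = true -> (i < m)%nat) /\
  exists lam : nat -> R,
    (forall i, (i < m)%nat -> (S i = true -> 0 < lam i) /\ (S i = false -> lam i = 0)) /\
    sumR m lam = 1 /\ x = lincomb m lam a.

(* sv is a possible value of s_f(x), where g = grad f (x) *)
Definition is_sf (d m : nat) (a : nat -> vec) (g sv : vec) : Prop :=
  exists i, (i < m)%nat /\ sv = a i /\
    forall j, (j < m)%nat -> ip d g (a i) <= ip d g (a j).

Definition is_vS (d : nat) (a : nat -> vec) (g : vec) (S : nat -> bool) (vv : vec) : Prop :=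
  exists i, S i = true /\ vv = a i /\
    forall j, S j = true -> ip d g (a j) <= ip d g (a i).

Definition is_vf (d m : nat) (a : nat -> vec) (x g vv : vec) : Prop :=
  exists S, in_Sx m a x S /\ is_vS d a g S vv /\
    forall S' w, in_Sx m a x S' -> is_vS d a g S' w -> ip d g vv <= ip d g w.

(* elements of the set whose inf is mu_f^A *)
Definition mu_set (d m : nat) (a : nat -> vec) (f : vec -> R) (grad : vec -> vec)
  (r : R) : Prop :=
  exists x xs sv vv, in_conv m a x /\ in_conv m a xs /\
    ip d (grad x) (vsub xs x) < 0 /\
    is_sf d m a (grad x) sv /\ is_vf d m a x (grad x) vv /\
    let gamA := (- ip d (grad x) (vsub xs x)) / (- ip d (grad x) (vsub sv vv)) in
    r = 2 / (gamA ^ 2) * (f xs - f x - ip d (grad x) (vsub xs x)).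

(* ---------- The AFW algorithm ----------
   x t : iterate, alpha t i : weight of atom a i, s t / v t : indices of the
   FW atom s_t and away atom v_t, gamma t : step size. *)

Definition is_fw (d : nat) (a : nat -> vec) (grad : vec -> vec) (x : nat -> vec)
  (s v : nat -> nat) (t : nat) : bool :=
  if Rge_dec (- ip d (grad (x t)) (vsub (a (s t)) (x t)))
             (- ip d (grad (x t)) (vsub (x t) (a (v t)))) then true else false.

Definition dirn (d : nat) (a : nat -> vec) (grad : vec -> vec) (x : nat -> vec)
  (s v : nat -> nat) (t : nat) : vec :=
  if is_fw d a grad x s v t then vsub (a (s t)) (x t) else vsub (x t) (a (v t)).

Definition gmax (d : nat) (a : nat -> vec) (grad : vec -> vec) (x : nat -> vec)
  (alpha : nat -> nat -> R) (s v : nat -> nat) (t : nat) : R :=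
  if is_fw d a grad x s v t then 1
  else alpha t (v t) / (1 - alpha t (v t)).

Definition AFW_run (d m : nat) (a : nat -> vec) (f : vec -> R) (grad : vec -> vec)
  (x : nat -> vec) (alpha : nat -> nat -> R) (s v : nat -> nat) (gamma : nat -> R)
  : Prop :=
  (exists i0, (i0 < m)%nat /\ x O = a i0 /\
     forall i, alpha O i = if Nat.eqb i i0 then 1 else 0) /\
  forall t,
    let g := grad (x t) in
    let dt := dirn d a grad x s v t in
    let gm := gmax d a grad x alpha s v t in
    ((s t < m)%nat /\ forall j, (j < m)%nat -> ip d g (a (s t)) <= ip d g (a j)) /\
    ((v t < m)%nat /\ 0 < alpha t (v t) /\
       forall j, (j < m)%nat -> 0 < alpha t j -> ip d g (a j) <= ip d g (a (v t))) /\
    (0 <= gamma t <= gm /\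
       forall gam, 0 <= gam <= gm ->
         f (vadd (x t) (vscal (gamma t) dt)) <= f (vadd (x t) (vscal gam dt))) /\
    x (S t) = vadd (x t) (vscal (gamma t) dt) /\
    (forall i, alpha (S t) i =
       if is_fw d a grad x s v t then
         (if Nat.eqb i (s t) then (1 - gamma t) * alpha t i + gamma t
          else (1 - gamma t) * alpha t i)
       else
         (if Nat.eqb i (v t) then (1 + gamma t) * alpha t i - gamma t
          else (1 + gamma t) * alpha t i)).

Definition is_drop (d : nat) (a : nat -> vec) (grad : vec -> vec) (x : nat -> vec)
  (alpha : nat -> nat -> R) (s v : nat -> nat) (gamma : nat -> R) (t : nat) : bool :=
  negb (is_fw d a grad x s v t) &&
  (if Req_EM_T (gamma t) (gmax d a grad x alpha s v t) then true else false).

From Stdlib Require Import Reals Lra Lia Arith FunctionalExtensionality Classical.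
Open Scope R_scope.

(* A step that is not a drop does at least as well as any step of length [gam <= 1] along its
   direction (exact line search, plus convexity along the ray when an away step stopped early),
   so the curvature constant gives [h' <= h - gam g + gam^2 Cf / 2], where the chosen gap [g]
   dominates both the Frank-Wolfe gap [>= h] and half the pairwise gap along [s - v_f].
   Geometric strong convexity then gives [mu h <= 2 g^2], hence the linear rate with
   [gam = min(1, g / Cf)]; the choice [gam = 2 / (k + 4)] gives the sublinear rate.  Drop steps
   merely do not increase [h]; each one removes an atom from the active set, which only
   Frank-Wolfe steps can enlarge (by one), so at most half of the steps are drops. *)

Lemma sumR_ext n F G : (forall i, (i < n)%nat -> F i = G i) -> sumR n F = sumR n G.
Proof.
  induction n as [|n IH]; simpl; intros H; auto.
  rewrite IH by (intros; apply H; lia). now rewrite H by lia.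
Qed.

Lemma sumR_plus n F G : sumR n (fun i => F i + G i) = sumR n F + sumR n G.
Proof. induction n as [|n IH]; simpl; [lra|]. rewrite IH; lra. Qed.

Lemma sumR_minus n F G : sumR n (fun i => F i - G i) = sumR n F - sumR n G.
Proof. induction n as [|n IH]; simpl; [lra|]. rewrite IH; lra. Qed.

Lemma sumR_scal n c F : sumR n (fun i => c * F i) = c * sumR n F.
Proof. induction n as [|n IH]; simpl; [lra|]. rewrite IH; lra. Qed.

Lemma sumR_le n F G : (forall i, (i < n)%nat -> F i <= G i) -> sumR n F <= sumR n G.
Proof.
  induction n as [|n IH]; simpl; intros H; [lra|].
  assert (F n <= G n) by (apply H; lia).
  assert (sumR n F <= sumR n G) by (apply IH; intros; apply H; lia).
  lra.
Qed.

Lemma sumR_zero n F : (forall i, (i < n)%nat -> F i = 0) -> sumR n F = 0.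
Proof.
  induction n as [|n IH]; simpl; intros H; [lra|].
  rewrite IH by (intros; apply H; lia). rewrite H by lia. lra.
Qed.

Lemma sumR_swap n p F :
  sumR n (fun i => sumR p (fun j => F i j)) = sumR p (fun j => sumR n (fun i => F i j)).
Proof.
  induction n as [|n IH]; simpl.
  - symmetry. now apply sumR_zero.
  - now rewrite IH, <- sumR_plus.
Qed.

Lemma sumR_delta n j F : (j < n)%nat ->
  sumR n (fun i => if Nat.eqb i j then F i else 0) = F j.
Proof.
  induction n as [|n IH]; simpl; intros Hj; [lia|].
  destruct (Nat.eqb_spec n j) as [->|Hnj].
  - rewrite sumR_zero; [lra|].
    intros i Hi. destruct (Nat.eqb_spec i j); [lia|auto].
  - rewrite IH by lia. lra.
Qed.

Lemma sumR_delta_mul n j F : (j < n)%nat ->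
  sumR n (fun i => (if Nat.eqb i j then 1 else 0) * F i) = F j.
Proof.
  intros Hj. rewrite <- (sumR_delta n j F Hj).
  apply sumR_ext. intros i _. destruct (Nat.eqb i j); lra.
Qed.

Lemma sumR_single_le n j F : (j < n)%nat -> (forall i, (i < n)%nat -> 0 <= F i) ->
  F j <= sumR n F.
Proof.
  intros Hj H. rewrite <- (sumR_delta n j F Hj).
  apply sumR_le. intros i Hi. destruct (Nat.eqb i j); auto. lra.
Qed.

Lemma sumR_pair_le n i j F : (i < n)%nat -> (j < n)%nat -> i <> j ->
  (forall k, (k < n)%nat -> 0 <= F k) -> F i + F j <= sumR n F.
Proof.
  intros Hi Hj Hij H.
  set (F' := fun k => if Nat.eqb k j then 0 else F k).
  assert (E : sumR n F = sumR n (fun k => if Nat.eqb k j then F k else 0) + sumR n F').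
  { rewrite <- sumR_plus. apply sumR_ext. intros k _. unfold F'. destruct (Nat.eqb k j); lra. }
  assert (HF'i : F' i = F i) by (unfold F'; destruct (Nat.eqb_spec i j); [lia|auto]).
  assert (F' i <= sumR n F').
  { apply sumR_single_le; auto. intros k Hk. unfold F'. destruct (Nat.eqb k j); auto; lra. }
  rewrite E, sumR_delta by auto. lra.
Qed.

Lemma countN_le n P : (countN n P <= n)%nat.
Proof. induction n; simpl; auto. destruct (P n); lia. Qed.

Lemma countN_mono n P Q : (forall i, (i < n)%nat -> P i = true -> Q i = true) ->
  (countN n P <= countN n Q)%nat.
Proof.
  induction n as [|n IH]; simpl; intros H; auto.
  specialize (IH (fun i Hi => H i ltac:(lia))).
  destruct (P n) eqn:E; [rewrite (H n ltac:(lia) E)|destruct (Q n)]; lia.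
Qed.

Lemma countN_le_add1 n P Q j : (forall i, (i < n)%nat -> P i = true -> Q i = true \/ i = j) ->
  (countN n P <= countN n Q + 1)%nat.
Proof.
  intros H.
  assert (A : forall k, (k <= n)%nat ->
    (countN k P <= countN k Q + (if Nat.ltb j k then 1 else 0))%nat).
  { induction k as [|k IH]; simpl; intros Hk; auto.
    specialize (IH ltac:(lia)). revert IH.
    destruct (Nat.ltb_spec j k); destruct (Nat.ltb_spec j (S k)); try lia; intros IH.
    - destruct (P k) eqn:E; destruct (Q k) eqn:E2; try lia.
      destruct (H k ltac:(lia) E); [congruence|lia].
    - assert (j = k) by lia. subst k. destruct (P j); destruct (Q j); lia.
    - destruct (P k) eqn:E; destruct (Q k) eqn:E2; try lia.
      destruct (H k ltac:(lia) E); [congruence|lia]. }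
  specialize (A n (le_n n)). destruct (Nat.ltb j n); lia.
Qed.

Lemma countN_lt n P Q j : (forall i, (i < n)%nat -> P i = true -> Q i = true) ->
  (j < n)%nat -> Q j = true -> P j = false -> (countN n P + 1 <= countN n Q)%nat.
Proof.
  induction n as [|n IH]; simpl; intros H Hj HQ HP; [lia|].
  destruct (Nat.eq_dec j n) as [->|Hjn].
  - rewrite HQ, HP.
    assert (countN n P <= countN n Q)%nat by (apply countN_mono; intros; apply H; auto; lia).
    lia.
  - specialize (IH (fun i Hi => H i ltac:(lia)) ltac:(lia) HQ HP).
    destruct (P n) eqn:E; [rewrite (H n ltac:(lia) E)|destruct (Q n)]; lia.
Qed.

Lemma countN_disjoint n P Q : (forall i, (i < n)%nat -> P i = true -> Q i = false) ->
  (countN n P + countN n Q <= n)%nat.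
Proof.
  induction n as [|n IH]; simpl; intros H; auto.
  specialize (IH (fun i Hi => H i ltac:(lia))).
  destruct (P n) eqn:E; [rewrite (H n ltac:(lia) E)|destruct (Q n)]; lia.
Qed.

Lemma countN_pos n P j : (j < n)%nat -> P j = true -> (1 <= countN n P)%nat.
Proof.
  induction n as [|n IH]; simpl; intros Hj HP; [lia|].
  destruct (Nat.eq_dec j n) as [->|Hjn]; [rewrite HP; lia|].
  specialize (IH ltac:(lia) HP). lia.
Qed.

Lemma countN_false n : countN n (fun _ => false) = 0%nat.
Proof. induction n; simpl; lia. Qed.

Lemma ip_vsub d g x y : ip d g (vsub x y) = ip d g x - ip d g y.
Proof. unfold ip, vsub. rewrite <- sumR_minus. apply sumR_ext; intros; ring. Qed.

Lemma ip_vscal d g c x : ip d g (vscal c x) = c * ip d g x.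
Proof. unfold ip, vscal. rewrite <- sumR_scal. apply sumR_ext; intros; ring. Qed.

Lemma ip_vscal_l d g c x : ip d (vscal c g) x = c * ip d g x.
Proof. unfold ip, vscal. rewrite <- sumR_scal. apply sumR_ext; intros; ring. Qed.

Lemma ip_lincomb d g m lam a :
  ip d g (lincomb m lam a) = sumR m (fun i => lam i * ip d g (a i)).
Proof.
  unfold ip, lincomb.
  transitivity (sumR d (fun j => sumR m (fun i => lam i * (g j * a i j)))).
  { apply sumR_ext; intros. rewrite <- sumR_scal. apply sumR_ext; intros; ring. }
  rewrite sumR_swap. apply sumR_ext; intros. now rewrite <- sumR_scal.
Qed.

Lemma norm_vscal d c x : norm d (vscal c x) = Rabs c * norm d x.
Proof.
  unfold norm. rewrite ip_vscal, ip_vscal_l, <- Rmult_assoc.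
  rewrite sqrt_mult_alt by apply Rle_0_sqr. now rewrite <- sqrt_Rsqr_abs.
Qed.

Lemma vadd_vscal0 x y : vadd x (vscal 0 y) = x.
Proof. extensionality k. unfold vadd, vscal. ring. Qed.

Lemma lincomb_delta m j a : (j < m)%nat ->
  lincomb m (fun i => if Nat.eqb i j then 1 else 0) a = a j.
Proof. intros Hj. extensionality k. unfold lincomb. now rewrite sumR_delta_mul. Qed.

Section ConvexHull.

Variables (d m : nat) (a : nat -> vec).

Lemma in_conv_atom k : (k < m)%nat -> in_conv m a (a k).
Proof.
  intros Hk. exists (fun i => if Nat.eqb i k then 1 else 0). repeat split.
  - intros i _. destruct (Nat.eqb i k); lra.
  - apply (sumR_delta m k (fun _ => 1) Hk).
  - now rewrite lincomb_delta.
Qed.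

Lemma in_conv_comb p q l : in_conv m a p -> in_conv m a q -> 0 <= l <= 1 ->
  in_conv m a (vadd (vscal l p) (vscal (1 - l) q)).
Proof.
  intros [lp [Hp1 [Hp2 ->]]] [lq [Hq1 [Hq2 ->]]] Hl.
  exists (fun i => l * lp i + (1 - l) * lq i). repeat split.
  - intros i Hi. specialize (Hp1 i Hi). specialize (Hq1 i Hi). nra.
  - rewrite sumR_plus, !sumR_scal, Hp2, Hq2. ring.
  - extensionality j. unfold vadd, vscal, lincomb.
    rewrite <- !sumR_scal, <- sumR_plus. apply sumR_ext; intros; ring.
Qed.

Lemma in_conv_transfer lam i j gam : (i < m)%nat -> (j < m)%nat ->
  (forall k, (k < m)%nat -> 0 <= lam k) -> sumR m lam = 1 -> 0 <= gam <= lam j ->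
  in_conv m a (vadd (lincomb m lam a) (vscal gam (vsub (a i) (a j)))).
Proof.
  intros Hi Hj Hlam0 Hl1 Hgam.
  set (di := fun k => if Nat.eqb k i then 1 else 0).
  set (dj := fun k => if Nat.eqb k j then 1 else 0).
  exists (fun k => lam k + gam * di k - gam * dj k). repeat split.
  - intros k Hk. pose proof (Hlam0 k Hk). unfold di, dj.
    destruct (Nat.eqb_spec k i); destruct (Nat.eqb_spec k j); subst; lra.
  - rewrite sumR_minus, sumR_plus, !sumR_scal, Hl1. unfold di, dj.
    rewrite (sumR_delta m i (fun _ => 1) Hi), (sumR_delta m j (fun _ => 1) Hj). ring.
  - rewrite <- (lincomb_delta m i a Hi), <- (lincomb_delta m j a Hj).
    extensionality k. unfold vadd, vscal, vsub, lincomb.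
    rewrite <- sumR_minus, <- sumR_scal, <- sumR_plus.
    apply sumR_ext. intros. unfold di, dj. ring.
Qed.

Lemma in_conv_Rd x : (forall i, (i < m)%nat -> in_Rd d (a i)) -> in_conv m a x -> in_Rd d x.
Proof.
  intros Ha [l [_ [_ ->]]] j Hj. unfold lincomb.
  apply sumR_zero. intros i Hi. rewrite (Ha i Hi j Hj). ring.
Qed.

Lemma in_mink_conv x : in_conv m a x -> in_mink m a x.
Proof.
  intros H. exists x, x, x. repeat split; auto.
  extensionality j. unfold vadd, vsub. ring.
Qed.

Lemma in_mink_step x s v gam : in_conv m a x -> in_conv m a s -> in_conv m a v ->
  0 <= gam <= 1 -> in_mink m a (vadd x (vscal gam (vsub s v))).
Proof.
  intros Hx Hs Hv Hg. exists x, (vadd (vscal gam s) (vscal (1 - gam) v)), v.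
  repeat split; auto using in_conv_comb.
  extensionality j. unfold vadd, vscal, vsub. ring.
Qed.

Lemma ip_lincomb_le g lam c : (forall i, (i < m)%nat -> 0 <= lam i) -> sumR m lam = 1 ->
  (forall i, (i < m)%nat -> 0 < lam i -> ip d g (a i) <= c) -> ip d g (lincomb m lam a) <= c.
Proof.
  intros H1 H2 H3. rewrite ip_lincomb.
  replace c with (sumR m (fun i => lam i * c))
    by (rewrite (sumR_ext m _ (fun i => c * lam i)) by (intros; ring); rewrite sumR_scal, H2; ring).
  apply sumR_le. intros i Hi. destruct (H1 i Hi) as [Hl|Hl].
  - apply Rmult_le_compat_l; auto; lra.
  - rewrite <- Hl. lra.
Qed.

Lemma ip_conv_ge g x c : in_conv m a x -> (forall i, (i < m)%nat -> c <= ip d g (a i)) ->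
  c <= ip d g x.
Proof.
  intros [lam [H1 [H2 ->]]] H. rewrite ip_lincomb.
  replace c with (sumR m (fun i => lam i * c))
    by (rewrite (sumR_ext m _ (fun i => c * lam i)) by (intros; ring); rewrite sumR_scal, H2; ring).
  apply sumR_le. intros i Hi. apply Rmult_le_compat_l; auto.
Qed.

Lemma ip_Sx_le g x S vv : in_Sx m a x S -> is_vS d a g S vv -> ip d g x <= ip d g vv.
Proof.
  intros [HS [lam [Hl1 [Hl2 ->]]]] [iv [Hiv [-> Hmax]]].
  apply ip_lincomb_le; auto.
  - intros i Hi. destruct (Hl1 i Hi). destruct (S i); [left; auto|right; symmetry; auto].
  - intros i Hi Hp. apply Hmax. destruct (S i) eqn:E; auto.
    destruct (Hl1 i Hi) as [_ H0]. rewrite H0 in Hp; auto. lra.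
Qed.

Lemma ip_sf_le g xs sv : in_conv m a xs -> is_sf d m a g sv -> ip d g sv <= ip d g xs.
Proof. intros Hxs [i [Hi [-> Hmin]]]. now apply ip_conv_ge. Qed.

End ConvexHull.

Lemma Rinv_nonneg z : 0 <= z -> 0 <= / z.
Proof.
  intros H. destruct (Req_dec z 0) as [->|]; [rewrite Rinv_0; lra|].
  left. apply Rinv_0_lt_compat. lra.
Qed.

Lemma exists_argmin_nat n (P : nat -> Prop) (c : nat -> R) :
  (exists i, (i < n)%nat /\ P i) ->
  exists i, (i < n)%nat /\ P i /\ forall j, (j < n)%nat -> P j -> c i <= c j.
Proof.
  induction n as [|n IH]; intros [i [Hi HP]]; [lia|].
  destruct (classic (exists i, (i < n)%nat /\ P i)) as [Hex|Hno].
  - destruct (IH Hex) as [i0 [Hi0 [HP0 Hmin]]].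
    destruct (classic (P n /\ c n < c i0)) as [[HPn Hc]|Hn].
    + exists n. repeat split; auto. intros j Hj HPj.
      destruct (Nat.eq_dec j n); [subst; lra|]. specialize (Hmin j ltac:(lia) HPj). lra.
    + exists i0. repeat split; auto. intros j Hj HPj.
      destruct (Nat.eq_dec j n); [subst|apply Hmin; auto; lia].
      apply Rnot_lt_le. intro. apply Hn. auto.
  - assert (i = n) as ->.
    { destruct (Nat.eq_dec i n); auto. exfalso. apply Hno. exists i. split; auto. lia. }
    exists n. repeat split; auto. intros j Hj HPj.
    destruct (Nat.eq_dec j n); [subst; lra|]. exfalso. apply Hno. exists j. split; auto. lia.
Qed.

Section ConvexProblem.

Variables (d m : nat) (a : nat -> vec) (f : vec -> R) (grad : vec -> vec) (U : vec -> Prop).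
Hypothesis Ha : forall i, (i < m)%nat -> in_Rd d (a i).
Hypothesis HUmink : forall y, in_mink m a y -> U y.
Hypothesis Hgrad : forall y, U y -> has_grad d f y (grad y).
Hypothesis Hconv : convex_on U f.

(* If the tangent inequality failed by [d0 > 0], convexity along the segment towards [y] would
   contradict the first-order expansion at a point [z] close enough to [x]. *)
Lemma convex_first_order x y : in_conv m a x -> in_conv m a y ->
  f x + ip d (grad x) (vsub y x) <= f y.
Proof.
  intros Hx Hy.
  set (N := norm d (vsub y x)). set (I := ip d (grad x) (vsub y x)).
  assert (HN : 0 <= N) by apply sqrt_pos.
  destruct (Rle_dec (f x + I) (f y)) as [ok|nok]; auto. exfalso.
  set (d0 := f x + I - f y). assert (Hd0 : 0 < d0) by (unfold d0; lra).
  set (eps := d0 / (2 * (N + 1))).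
  assert (Heps : 0 < eps) by (unfold eps; apply Rdiv_lt_0_compat; lra).
  assert (HepsN : eps * N < d0).
  { unfold eps, Rdiv. assert (0 < / (2 * (N + 1))) by (apply Rinv_0_lt_compat; lra).
    assert (d0 * / (2 * (N + 1)) * (2 * (N + 1)) = d0) by (field; lra). nra. }
  destruct (Hgrad x (HUmink x (in_mink_conv m a x Hx))) as [_ Hg].
  destruct (Hg eps Heps) as [del [Hdel Hexp]].
  set (l := del / (del + N + 1)).
  assert (Hl : 0 < l) by (unfold l; apply Rdiv_lt_0_compat; lra).
  assert (Hl1 : l < 1) by (assert (l * (del + N + 1) = del) by (unfold l; field; lra); nra).
  assert (HlN : l * N < del) by (assert (l * (del + N + 1) = del) by (unfold l; field; lra); nra).
  set (z := vadd (vscal l y) (vscal (1 - l) x)).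
  assert (Hz : in_conv m a z) by (apply in_conv_comb; auto; lra).
  assert (Hzx : vsub z x = vscal l (vsub y x))
    by (extensionality j; unfold z, vsub, vadd, vscal; ring).
  assert (Hc : f z <= l * f y + (1 - l) * f x).
  { apply Hconv; try apply HUmink, in_mink_conv; auto. lra. }
  assert (Hnorm : norm d (vsub z x) = l * N)
    by (rewrite Hzx, norm_vscal, Rabs_pos_eq; unfold N; lra).
  specialize (Hexp z (in_conv_Rd d m a z Ha Hz)). rewrite Hnorm in Hexp.
  specialize (Hexp HlN). rewrite Hzx, ip_vscal in Hexp. fold I in Hexp.
  pose proof (Rle_abs (- (f z - f x - l * I))) as Habs. rewrite Rabs_Ropp in Habs.
  assert (l * (f y - f x - I + eps * N) >= 0) by nra.
  assert (f y - f x - I + eps * N >= 0) by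
    (destruct (Rlt_le_dec (f y - f x - I + eps * N) 0); nra).
  unfold d0 in HepsN. lra.
Qed.

Lemma mu_nonneg mu : is_inf (mu_set d m a f grad) mu -> 0 <= mu.
Proof.
  intros [_ H]. apply H. intros r [x0 [xs [sv [vv [Hx [Hxs [_ [_ [_ ->]]]]]]]]].
  apply Rmult_le_pos; [apply Rmult_le_pos; [lra|apply Rinv_nonneg, pow2_ge_0]|].
  pose proof (convex_first_order x0 xs Hx Hxs). lra.
Qed.

End ConvexProblem.

Section Curvature.

Variables (d m : nat) (a : nat -> vec) (f : vec -> R) (grad : vec -> vec) (Cf : R).
Hypothesis HCf : is_lub (curv_set d m a f grad) Cf.

Lemma curvature_bound x s v gam :
  in_conv m a x -> in_conv m a s -> in_conv m a v -> 0 < gam <= 1 ->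
  f (vadd x (vscal gam (vsub s v))) - f x - gam * ip d (grad x) (vsub s v) <= gam ^ 2 * Cf / 2.
Proof.
  intros Hx Hs Hv Hg. destruct HCf as [Hub _].
  set (D := f (vadd x (vscal gam (vsub s v))) - f x - gam * ip d (grad x) (vsub s v)).
  assert (2 / gam ^ 2 * D <= Cf) by (apply Hub; exists x, s, v, gam; repeat split; auto; lra).
  assert (D = gam ^ 2 / 2 * (2 / gam ^ 2 * D)) by (field; lra).
  assert (0 < gam ^ 2) by (apply pow_lt; lra).
  nra.
Qed.

Lemma curvature_nonneg : (0 < m)%nat -> 0 <= Cf.
Proof.
  intros Hm. destruct HCf as [Hub _]. apply Hub. exists (a O), (a O), (a O), 1.
  repeat split; try apply in_conv_atom; auto; try lra.
  replace (vadd (a O) (vscal 1 (vsub (a O) (a O)))) with (a O)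
    by (extensionality k; unfold vadd, vscal, vsub; ring).
  rewrite ip_vsub. field.
Qed.

(* A witness [x0, xs, sv, vv] of [mu_set] yields the competitor [x0 + gam (sv - vv)] with
   [gam <= lam_vv], still in the hull, whose [gamma^A] is exactly [gam]; its [mu]-quotient is
   then a curvature quotient. *)
Lemma mu_le_curvature mu : is_inf (mu_set d m a f grad) mu -> mu <= Cf.
Proof.
  intros [Hlb Hglb].
  destruct (classic (exists r, mu_set d m a f grad r)) as [[r Hr]|Hno].
  2:{ assert (mu + 1 <= mu) by (apply Hglb; intros r Hr; exfalso; apply Hno; eauto). lra. }
  destruct Hr as [x0 [xs [sv [vv [Hx [Hxs [Hneg [Hsf [Hvf _]]]]]]]]].
  set (g := grad x0) in *.
  pose proof Hvf as [S [HS [HvS _]]].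
  pose proof (ip_Sx_le d m a _ _ _ _ HS HvS) as B1.
  pose proof (ip_sf_le d m a _ _ _ Hxs Hsf) as B2.
  rewrite ip_vsub in Hneg.
  assert (HB : ip d g (vsub sv vv) < 0) by (rewrite ip_vsub; lra).
  pose proof Hsf as [is_ [His [Hsv _]]].
  destruct HvS as [iv [Hivt [Hvv _]]].
  destruct HS as [HSm [lam [Hl1 [Hl2 Hl3]]]].
  assert (Hiv : (iv < m)%nat) by auto.
  assert (Hlampos : 0 < lam iv) by (apply (Hl1 iv Hiv); auto).
  assert (Hlam0 : forall i, (i < m)%nat -> 0 <= lam i).
  { intros i Hi. destruct (Hl1 i Hi). destruct (S i); [left; auto|right; symmetry; auto]. }
  set (gam := Rmin 1 (lam iv)).
  assert (Hg : 0 < gam <= 1) by (unfold gam; split; [apply Rmin_glb_lt; lra|apply Rmin_l]).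
  assert (Hg2 : gam <= lam iv) by apply Rmin_r.
  set (xs' := vadd x0 (vscal gam (vsub sv vv))).
  assert (Hxs' : in_conv m a xs')
    by (unfold xs'; rewrite Hl3, Hsv, Hvv; apply in_conv_transfer; auto; lra).
  assert (Hd : vsub xs' x0 = vscal gam (vsub sv vv))
    by (unfold xs'; extensionality k; unfold vsub, vadd, vscal; ring).
  assert (E1 : mu <= 2 / gam ^ 2 * (f xs' - f x0 - gam * ip d g (vsub sv vv))).
  { apply Hlb. exists x0, xs', sv, vv.
    split; [auto|split; [auto|split; [|split; [|split]]]].
    - fold g. rewrite Hd, ip_vscal. nra.
    - exact Hsf.
    - exact Hvf.
    - fold g. rewrite Hd, ip_vscal. cbv zeta.
      replace (- (gam * ip d g (vsub sv vv)) / - ip d g (vsub sv vv)) with gam by (field; lra).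
      auto. }
  assert (E2 : 2 / gam ^ 2 * (f xs' - f x0 - gam * ip d g (vsub sv vv)) <= Cf).
  { destruct HCf as [Hub _]. apply Hub. exists x0, sv, vv, gam.
    assert (in_conv m a sv) by (rewrite Hsv; now apply in_conv_atom).
    assert (in_conv m a vv) by (rewrite Hvv; now apply in_conv_atom).
    repeat split; auto; lra. }
  lra.
Qed.

End Curvature.

Lemma quadratic_gap_bound mu A B G h : 0 <= mu -> 0 < A -> A <= B ->
  mu * A ^ 2 <= 2 * B ^ 2 * (A - h) -> B <= 2 * G -> mu * h <= 2 * G ^ 2.
Proof.
  intros Hmu HA HAB Hq HBG.
  assert (HB : 0 < B) by lra.
  assert (mu * (mu * A ^ 2) <= mu * (2 * B ^ 2 * (A - h))) by (apply Rmult_le_compat_l; auto).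
  assert (0 <= (B ^ 2 - mu * A) ^ 2) by apply pow2_ge_0.
  assert (Hh : 2 * B ^ 2 * (mu * h) <= 2 * B ^ 2 * (B ^ 2 / 2))
    by (replace (2 * B ^ 2 * (B ^ 2 / 2)) with (B ^ 4) by field; nra).
  assert (mu * h <= B ^ 2 / 2) by (apply Rmult_le_reg_l with (2 * B ^ 2); nra).
  nra.
Qed.

(* The step [gam = min(1, G / Cf)] of the descent inequality. *)
Lemma descent_contraction mu Cf h h' G : 0 <= mu <= Cf -> 0 <= h <= G ->
  mu * h <= 2 * G ^ 2 ->
  (forall gam, 0 <= gam <= 1 -> h' <= h - gam * G + gam ^ 2 * Cf / 2) ->
  h' <= (1 - mu / (4 * Cf)) * h.
Proof.
  intros Hmu Hh Hkey Hstep.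
  destruct (Req_dec Cf 0) as [HC0|HC0].
  { assert (mu = 0) as -> by lra. specialize (Hstep 0 ltac:(lra)).
    unfold Rdiv. rewrite Rmult_0_l. lra. }
  set (rho := mu / (4 * Cf)).
  assert (Hrho : rho * (4 * Cf) = mu) by (unfold rho; field; lra).
  assert (0 <= rho) by (unfold rho; apply Rmult_le_pos; [lra|apply Rinv_nonneg; lra]).
  assert (rho <= 1 / 4) by nra.
  destruct (Rle_lt_dec G Cf) as [HGC|HGC].
  - assert (Hg : 0 <= G / Cf <= 1).
    { split; [apply Rmult_le_pos; [lra|apply Rinv_nonneg; lra]|].
      apply Rmult_le_reg_r with Cf; [lra|]. replace (G / Cf * Cf) with G by (field; lra). lra. }
    specialize (Hstep (G / Cf) Hg).
    replace (h - G / Cf * G + (G / Cf) ^ 2 * Cf / 2) with (h - G ^ 2 / (2 * Cf)) in Hstep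
      by (field; lra).
    assert (G ^ 2 / (2 * Cf) >= rho * h).
    { apply Rle_ge, Rmult_le_reg_r with (2 * Cf); [lra|].
      replace (G ^ 2 / (2 * Cf) * (2 * Cf)) with (G ^ 2) by (field; lra). nra. }
    lra.
  - specialize (Hstep 1 ltac:(lra)). nra.
Qed.

(* The step [gam = 2 / D] of the descent inequality. *)
Lemma sublinear_step D Cf C h h' : 4 <= D -> 0 <= Cf -> 2 * Cf <= C -> 0 <= h ->
  h <= 4 * C / D -> h' <= (1 - 2 / D) * h + (2 / D) ^ 2 * Cf / 2 -> h' <= 4 * C / (D + 1).
Proof.
  intros HD HC HC' Hh0 Hh Hh'.
  set (u := / D) in *. set (w := / (D + 1)).
  assert (D * u = 1) by (unfold u; field; lra).
  assert ((D + 1) * w = 1) by (unfold w; field; lra).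
  assert (0 < u) by (unfold u; apply Rinv_0_lt_compat; lra).
  assert (0 < w) by (unfold w; apply Rinv_0_lt_compat; lra).
  unfold Rdiv in *. fold u in Hh, Hh'. fold w.
  assert (u <= 1 / 4) by nra.
  assert (u - w = u * w) by nra.
  assert ((1 - 2 * u) * h <= (1 - 2 * u) * (4 * C * u)) by (apply Rmult_le_compat_l; lra).
  assert ((2 * u) ^ 2 * Cf * / 2 <= u * u * C) by nra.
  assert (4 * C * u - 7 * C * u * u <= 4 * C * w).
  { assert (4 * w <= 7 * u) by nra.
    assert (0 <= u * (7 * u - 4 * w)) by (apply Rmult_le_pos; lra).
    assert (0 <= C * (u * (7 * u - 4 * w))) by (apply Rmult_le_pos; lra). nra. }
  nra.
Qed.

Section MarkedSteps.

Variables (h : nat -> R) (P : nat -> bool).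
Hypothesis h_nonincr : forall t, h (S t) <= h t.

Lemma geometric_decay_unmarked q : 0 <= q ->
  (forall t, P t = false -> h (S t) <= q * h t) ->
  forall t, h t <= q ^ (t - countN t P) * h O.
Proof.
  intros Hq Hstep. induction t as [|t IH]; [simpl; lra|].
  change (countN (S t) P) with (countN t P + (if P t then 1 else 0))%nat.
  pose proof (countN_le t P). pose proof (h_nonincr t).
  destruct (P t) eqn:E.
  - replace (S t - (countN t P + 1))%nat with (t - countN t P)%nat by lia. lra.
  - replace (S t - (countN t P + 0))%nat with (S (t - countN t P)) by lia. simpl.
    specialize (Hstep t E).
    assert (q * h t <= q * (q ^ (t - countN t P) * h O)) by (apply Rmult_le_compat_l; lra).
    lra.
Qed.

Lemma sublinear_decay_unmarked Cf : 0 <= Cf -> (forall t, 0 <= h t) ->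
  (forall t, P t = false -> forall gam, 0 <= gam <= 1 ->
     h (S t) <= (1 - gam) * h t + gam ^ 2 * Cf / 2) ->
  forall t, h t <= 4 * (2 * Cf + h O) / (INR (t - countN t P) + 4).
Proof.
  intros HCf Hh0 Hstep. induction t as [|t IH]; [specialize (Hh0 O); simpl; lra|].
  change (countN (S t) P) with (countN t P + (if P t then 1 else 0))%nat.
  pose proof (countN_le t P). pose proof (h_nonincr t).
  destruct (P t) eqn:E.
  - replace (S t - (countN t P + 1))%nat with (t - countN t P)%nat by lia. lra.
  - replace (S t - (countN t P + 0))%nat with (S (t - countN t P)) by lia.
    rewrite S_INR. set (K := INR (t - countN t P)) in *.
    assert (0 <= K) by apply pos_INR.
    replace (K + 1 + 4) with ((K + 4) + 1) by ring.
    assert (Hg : 0 <= 2 / (K + 4) <= 1).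
    { split; [apply Rmult_le_pos; [lra|apply Rinv_nonneg; lra]|].
      apply Rmult_le_reg_r with (K + 4); [lra|].
      replace (2 / (K + 4) * (K + 4)) with 2 by (field; lra). lra. }
    apply sublinear_step with Cf (h t); auto; try lra.
    specialize (Hh0 O). lra.
Qed.

End MarkedSteps.

Lemma exp_pow r n : exp r ^ n = exp (INR n * r).
Proof.
  induction n as [|n IH]; simpl; [now rewrite Rmult_0_l, exp_0|].
  rewrite IH, <- exp_plus. f_equal. destruct n; simpl; ring.
Qed.

Lemma geometric_le_exp rho h0 t k : 0 <= rho <= 1 -> 0 <= h0 -> (t <= 2 * k)%nat ->
  (1 - rho) ^ k * h0 <= h0 * exp (- (1 / 2) * rho * INR t).
Proof.
  intros Hrho Hh0 Htk.
  assert (Hpow : (1 - rho) ^ k <= exp (INR k * - rho)).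
  { rewrite <- exp_pow. apply pow_incr. pose proof (exp_ineq1_le (- rho)). lra. }
  assert (Hexp : exp (INR k * - rho) <= exp (- (1 / 2) * rho * INR t)).
  { apply le_INR in Htk. rewrite mult_INR in Htk. simpl in Htk.
    assert (rho * INR t <= rho * (2 * INR k)) by (apply Rmult_le_compat_l; lra).
    destruct (Req_dec (INR k * - rho) (- (1 / 2) * rho * INR t)) as [->|]; [lra|].
    left. apply exp_increasing. lra. }
  assert ((1 - rho) ^ k * h0 <= exp (- (1 / 2) * rho * INR t) * h0)
    by (apply Rmult_le_compat_r; lra).
  lra.
Qed.

Definition conv_weights (m : nat) (a : nat -> vec) (lam : nat -> R) (y : vec) : Prop :=
  (forall i, (m <= i)%nat -> lam i = 0) /\ (forall i, (i < m)%nat -> 0 <= lam i) /\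
  sumR m lam = 1 /\ y = lincomb m lam a.

Definition supp_size (m : nat) (lam : nat -> R) : nat :=
  countN m (fun i => if Rlt_dec 0 (lam i) then true else false).

Definition active_set (m : nat) (lam : nat -> R) (i : nat) : bool :=
  Nat.ltb i m && (if Rlt_dec 0 (lam i) then true else false).

Lemma conv_weights_in_conv m a lam y : conv_weights m a lam y -> in_conv m a y.
Proof. intros [_ [H1 [H2 H3]]]. now exists lam. Qed.

Lemma conv_weights_affine_update m a lam lam' y y' c j : (j < m)%nat ->
  conv_weights m a lam y ->
  (forall i, lam' i = c * lam i + (1 - c) * (if Nat.eqb i j then 1 else 0)) ->
  (forall i, (i < m)%nat -> 0 <= lam' i) ->
  y' = vadd (vscal c y) (vscal (1 - c) (a j)) -> conv_weights m a lam' y'.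
Proof.
  intros Hj [H0 [_ [H1 ->]]] Hlam' Hpos ->. repeat split; auto.
  - intros i Hi. rewrite Hlam', H0 by auto. destruct (Nat.eqb_spec i j); [lia|ring].
  - rewrite (sumR_ext m _ _ (fun i _ => Hlam' i)), sumR_plus, !sumR_scal, H1.
    rewrite (sumR_delta m j (fun _ => 1) Hj). ring.
  - rewrite <- (lincomb_delta m j a Hj). extensionality k. unfold vadd, vscal, lincomb.
    rewrite <- !sumR_scal, <- sumR_plus. apply sumR_ext. intros i _. rewrite Hlam'. ring.
Qed.

Lemma active_set_in_Sx m a lam y : conv_weights m a lam y -> in_Sx m a y (active_set m lam).
Proof.
  intros [_ [H1 [H2 H3]]]. unfold active_set. split.
  - intros i E. apply andb_prop in E as [E _]. now apply Nat.ltb_lt.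
  - exists lam. repeat split; auto; intros E.
    + apply andb_prop in E as [_ E]. destruct (Rlt_dec 0 _); [auto|discriminate].
    + pose proof (H1 i H). apply Nat.ltb_lt in H. rewrite H in E. simpl in E.
      destruct (Rlt_dec 0 _); [discriminate|lra].
Qed.

Section AFWRun.

Variables (d m : nat) (a : nat -> vec) (f : vec -> R) (grad : vec -> vec).
Variables (x : nat -> vec) (alpha : nat -> nat -> R) (s v : nat -> nat) (gamma : nat -> R).
Hypothesis Hrun : AFW_run d m a f grad x alpha s v gamma.
Variables (U : vec -> Prop) (Cf : R).
Hypothesis Ha : forall i, (i < m)%nat -> in_Rd d (a i).
Hypothesis HUmink : forall y, in_mink m a y -> U y.
Hypothesis Hgrad : forall y, U y -> has_grad d f y (grad y).
Hypothesis Hconv : convex_on U f.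
Hypothesis HCf : is_lub (curv_set d m a f grad) Cf.

Local Notation fw t := (is_fw d a grad x s v t).
Local Notation dir t := (dirn d a grad x s v t).
Local Notation gm t := (gmax d a grad x alpha s v t).
Local Notation drop := (is_drop d a grad x alpha s v gamma).
Local Notation gap t := (- ip d (grad (x t)) (dirn d a grad x s v t)).

Lemma afw_fw_atom t : (s t < m)%nat /\
  forall j, (j < m)%nat -> ip d (grad (x t)) (a (s t)) <= ip d (grad (x t)) (a j).
Proof. exact (proj1 (proj2 Hrun t)). Qed.

Lemma afw_away_atom t : (v t < m)%nat /\ 0 < alpha t (v t) /\
  forall j, (j < m)%nat -> 0 < alpha t j -> ip d (grad (x t)) (a j) <= ip d (grad (x t)) (a (v t)).
Proof. exact (proj1 (proj2 (proj2 Hrun t))). Qed.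

Lemma afw_step_range t : 0 <= gamma t <= gm t.
Proof. exact (proj1 (proj1 (proj2 (proj2 (proj2 Hrun t))))). Qed.

Lemma afw_line_search t gam : 0 <= gam <= gm t ->
  f (vadd (x t) (vscal (gamma t) (dir t))) <= f (vadd (x t) (vscal gam (dir t))).
Proof. exact (proj2 (proj1 (proj2 (proj2 (proj2 Hrun t)))) gam). Qed.

Lemma afw_iterate_next t : x (S t) = vadd (x t) (vscal (gamma t) (dir t)).
Proof. exact (proj1 (proj2 (proj2 (proj2 (proj2 Hrun t))))). Qed.

Lemma afw_weights_next t i : alpha (S t) i =
  if fw t then
    (if Nat.eqb i (s t) then (1 - gamma t) * alpha t i + gamma t else (1 - gamma t) * alpha t i)
  else
    (if Nat.eqb i (v t) then (1 + gamma t) * alpha t i - gamma t else (1 + gamma t) * alpha t i).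
Proof. exact (proj2 (proj2 (proj2 (proj2 (proj2 Hrun t)))) i). Qed.

Lemma drop_step_iff t : drop t = true <-> fw t = false /\ gamma t = gm t.
Proof.
  unfold is_drop. destruct (fw t); simpl.
  - split; [discriminate|intros [H _]; discriminate].
  - destruct (Req_EM_T _ _); split; auto; try discriminate. intros [_ H]; contradiction.
Qed.

Lemma gap_ge_fw_gap t : - ip d (grad (x t)) (vsub (a (s t)) (x t)) <= gap t.
Proof. unfold dirn, is_fw. destruct (Rge_dec _ _); lra. Qed.

Lemma gap_ge_away_gap t : - ip d (grad (x t)) (vsub (x t) (a (v t))) <= gap t.
Proof. unfold dirn, is_fw. destruct (Rge_dec _ _); lra. Qed.

Lemma fw_gap_nonneg t : in_conv m a (x t) -> 0 <= - ip d (grad (x t)) (vsub (a (s t)) (x t)).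
Proof.
  intros Hx. rewrite ip_vsub.
  assert (ip d (grad (x t)) (a (s t)) <= ip d (grad (x t)) (x t))
    by (apply ip_conv_ge with m a; auto; apply afw_fw_atom).
  lra.
Qed.

(* With [alpha_v = 1] the iterate is the atom [a v] itself, so the away gap is [0] and the
   (nonnegative) Frank-Wolfe gap would have been chosen. *)
Lemma away_weight_lt1 t : conv_weights m a (alpha t) (x t) -> fw t = false ->
  0 < alpha t (v t) < 1.
Proof.
  intros HI Efw. pose proof (fw_gap_nonneg t (conv_weights_in_conv _ _ _ _ HI)) as HF.
  destruct HI as [H0 [H1 [H2 H3]]]. destruct (afw_away_atom t) as [Hv1 [Hv2 _]].
  split; auto.
  assert (Hle : alpha t (v t) <= 1) by (rewrite <- H2; apply sumR_single_le; auto).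
  destruct Hle as [|Heq]; auto. exfalso.
  assert (Hdelta : forall i, (i < m)%nat -> alpha t i = if Nat.eqb i (v t) then 1 else 0).
  { intros i Hi. destruct (Nat.eqb_spec i (v t)) as [->|Hne]; auto.
    pose proof (sumR_pair_le m i (v t) (alpha t) Hi Hv1 Hne H1). pose proof (H1 i Hi). lra. }
  assert (Hxv : x t = a (v t))
    by (rewrite H3, <- (lincomb_delta m (v t) a Hv1); extensionality k;
        unfold lincomb; apply sumR_ext; intros i Hi; now rewrite Hdelta).
  unfold is_fw in Efw. destruct (Rge_dec _ _) as [|Hn]; [discriminate|]. apply Hn.
  assert (E : vsub (x t) (a (v t)) = fun _ => 0)
    by (rewrite Hxv; extensionality k; unfold vsub; ring).
  rewrite E. unfold ip at 2. rewrite sumR_zero by (intros; ring). lra.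
Qed.

Lemma afw_weights t : conv_weights m a (alpha t) (x t).
Proof.
  induction t as [|t IH].
  - destruct (proj1 Hrun) as [i0 [Hi0 [Hx0 Hal0]]].
    rewrite Hx0, <- (lincomb_delta m i0 a Hi0). repeat split.
    + intros i Hi. rewrite Hal0. destruct (Nat.eqb_spec i i0); [lia|auto].
    + intros i Hi. rewrite Hal0. destruct (Nat.eqb i i0); lra.
    + rewrite (sumR_ext m _ _ (fun i _ => Hal0 i)). exact (sumR_delta m i0 (fun _ => 1) Hi0).
    + f_equal. extensionality i. auto.
  - pose proof IH as [_ [H1 _]]. pose proof (afw_step_range t) as Hg.
    pose proof (afw_weights_next t) as Hal. pose proof (afw_iterate_next t) as Hx.
    unfold dirn, gmax in Hx, Hg. destruct (fw t) eqn:Efw.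
    + apply (conv_weights_affine_update _ _ _ _ _ _ (1 - gamma t) (s t) (proj1 (afw_fw_atom t)) IH).
      * intros i. rewrite Hal. destruct (Nat.eqb i (s t)); ring.
      * intros i Hi. rewrite Hal. pose proof (H1 i Hi). destruct (Nat.eqb i (s t)); nra.
      * rewrite Hx. extensionality k. unfold vadd, vscal, vsub. ring.
    + pose proof (away_weight_lt1 t IH Efw) as Hav.
      apply (conv_weights_affine_update _ _ _ _ _ _ (1 + gamma t) (v t) (proj1 (afw_away_atom t)) IH).
      * intros i. rewrite Hal. destruct (Nat.eqb i (v t)); ring.
      * intros i Hi. rewrite Hal. pose proof (H1 i Hi).
        destruct (Nat.eqb_spec i (v t)) as [->|]; [|nra].
        assert (gamma t * (1 - alpha t (v t)) <= alpha t (v t)).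
        { assert (alpha t (v t) / (1 - alpha t (v t)) * (1 - alpha t (v t)) = alpha t (v t))
            by (field; lra). nra. }
        nra.
      * rewrite Hx. extensionality k. unfold vadd, vscal, vsub. ring.
Qed.

Lemma afw_in_conv t : in_conv m a (x t).
Proof. exact (conv_weights_in_conv _ _ _ _ (afw_weights t)). Qed.

Lemma supp_fw_step t : fw t = true ->
  (supp_size m (alpha (S t)) <= supp_size m (alpha t) + 1)%nat.
Proof.
  intros Efw. pose proof (afw_weights t) as [_ [H1 _]]. pose proof (afw_step_range t) as Hg.
  unfold gmax in Hg. rewrite Efw in Hg.
  apply countN_le_add1 with (s t). intros i Hi.
  rewrite afw_weights_next, Efw. pose proof (H1 i Hi).
  destruct (Nat.eqb_spec i (s t)); auto. left.
  destruct (Rlt_dec 0 (alpha t i)); auto. destruct (Rlt_dec 0 _); auto. nra.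
Qed.

Lemma supp_away_step t : fw t = false -> forall i, (i < m)%nat ->
  0 < alpha (S t) i -> 0 < alpha t i.
Proof.
  intros Efw i Hi. pose proof (afw_weights t) as [_ [H1 _]]. pose proof (afw_step_range t).
  rewrite afw_weights_next, Efw. pose proof (H1 i Hi).
  destruct (Nat.eqb_spec i (v t)) as [->|]; [intros; apply afw_away_atom|nra].
Qed.

Lemma supp_drop_step t : drop t = true ->
  (supp_size m (alpha (S t)) + 1 <= supp_size m (alpha t))%nat.
Proof.
  intros Ed. apply drop_step_iff in Ed as [Efw Eg].
  pose proof (away_weight_lt1 t (afw_weights t) Efw) as Hav.
  apply countN_lt with (v t).
  - intros i Hi. do 2 destruct (Rlt_dec 0 _); auto; try discriminate.
    exfalso. apply n. now apply (supp_away_step t Efw).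
  - apply afw_away_atom.
  - destruct (Rlt_dec 0 _); auto; lra.
  - rewrite afw_weights_next, Efw, Nat.eqb_refl.
    unfold gmax in Eg. rewrite Efw in Eg. rewrite Eg.
    replace ((1 + alpha t (v t) / (1 - alpha t (v t))) * alpha t (v t)
             - alpha t (v t) / (1 - alpha t (v t))) with 0 by (field; lra).
    destruct (Rlt_dec 0 0); [lra|auto].
Qed.

Lemma supp_size_pos t : (1 <= supp_size m (alpha t))%nat.
Proof.
  destruct (afw_away_atom t) as [Hv1 [Hv2 _]].
  apply countN_pos with (v t); auto. destruct (Rlt_dec 0 _); auto.
Qed.

(* Drops shrink the active set, FW steps grow it by at most one, other away steps never do. *)
Lemma supp_size_plus_drops t :
  (supp_size m (alpha t) + countN t drop <= 1 + countN t (fun i => fw i))%nat.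
Proof.
  induction t as [|t IH]; simpl.
  - destruct (proj1 Hrun) as [i0 [Hi0 [_ Hal0]]].
    assert (supp_size m (alpha O) <= countN m (fun _ => false) + 1)%nat.
    { apply countN_le_add1 with i0. intros i _. rewrite Hal0.
      destruct (Nat.eqb_spec i i0); auto. destruct (Rlt_dec 0 0); [lra|discriminate]. }
    rewrite countN_false in H. lia.
  - destruct (fw t) eqn:Efw.
    + assert (drop t = false) as ->.
      { destruct (drop t) eqn:E; auto. apply drop_step_iff in E. destruct E; congruence. }
      pose proof (supp_fw_step t Efw). lia.
    + destruct (drop t) eqn:Ed.
      * pose proof (supp_drop_step t Ed). lia.
      * assert (supp_size m (alpha (S t)) <= supp_size m (alpha t))%nat.
        { apply countN_mono. intros i Hi. do 2 destruct (Rlt_dec 0 _); auto; try discriminate.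
          exfalso. apply n. now apply (supp_away_step t Efw). }
        lia.
Qed.

Lemma afw_drops_half t : (2 * countN t drop <= t)%nat.
Proof.
  pose proof (supp_size_plus_drops t). pose proof (supp_size_pos t).
  assert (countN t drop + countN t (fun i => fw i) <= t)%nat.
  { apply countN_disjoint. intros i _ E. apply drop_step_iff in E. tauto. }
  lia.
Qed.

Lemma afw_nonincreasing t : f (x (S t)) <= f (x t).
Proof.
  rewrite afw_iterate_next. rewrite <- (vadd_vscal0 (x t) (dir t)) at 2.
  apply afw_line_search. pose proof (afw_step_range t). lra.
Qed.
(* For a good away step the line search stopped before [gmax]; by convexity along the ray,
   [f] cannot decrease again further on, so the step also beats any [gam <= 1]. *)
Lemma afw_line_search_unit t : drop t = false -> forall gam, 0 <= gam <= 1 ->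
  f (x (S t)) <= f (vadd (x t) (vscal gam (dir t))).
Proof.
  intros Ed gam Hgam. rewrite afw_iterate_next. pose proof (afw_step_range t) as Hg.
  destruct (fw t) eqn:Efw.
  { apply afw_line_search. unfold gmax. rewrite Efw. lra. }
  assert (Hlt : gamma t < gm t).
  { destruct Hg as [_ [Hl|He]]; auto.
    assert (drop t = true) by (apply drop_step_iff; auto). congruence. }
  destruct (Rle_dec gam (gm t)) as [Hle|Hgt]; [apply afw_line_search; lra|].
  set (G := gm t) in *.
  set (P := fun c => vadd (x t) (vscal c (dir t))).
  assert (HP : forall c, 0 <= c <= 1 -> U (P c)).
  { intros c Hc. apply HUmink. unfold P, dirn. rewrite Efw.
    apply in_mink_step; auto using afw_in_conv. apply in_conv_atom, afw_away_atom. }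
  set (l := (gam - G) / (gam - gamma t)).
  assert (Hl1 : l * (gam - gamma t) = gam - G) by (unfold l; field; lra).
  assert (Hl0 : 0 < l) by (unfold l; apply Rdiv_lt_0_compat; lra).
  assert (Hl2 : l < 1) by nra.
  assert (Hcomb : vadd (vscal l (P (gamma t))) (vscal (1 - l) (P gam)) = P G).
  { unfold P. extensionality k. unfold vadd, vscal.
    replace G with (l * gamma t + (1 - l) * gam) by lra. ring. }
  assert (Hc := Hconv (P (gamma t)) (P gam) l ltac:(apply HP; lra) ltac:(apply HP; lra)
                  ltac:(lra)).
  rewrite Hcomb in Hc. specialize (Hc ltac:(apply HP; lra)).
  assert (f (P (gamma t)) <= f (P G)) by (apply afw_line_search; fold G; lra).
  change (f (P (gamma t)) <= f (P gam)). nra.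
Qed.

Lemma afw_step_bound t : drop t = false -> forall gam, 0 <= gam <= 1 ->
  f (x (S t)) <= f (x t) - gam * gap t + gam ^ 2 * Cf / 2.
Proof.
  intros Ed gam Hgam. pose proof (afw_line_search_unit t Ed gam Hgam) as HL.
  destruct Hgam as [[Hg0|<-] Hg1]; [|rewrite vadd_vscal0 in HL; lra].
  pose proof (afw_in_conv t) as Hx. unfold dirn in *. destruct (fw t).
  - pose proof (curvature_bound d m a f grad Cf HCf (x t) (a (s t)) (x t) gam Hx
      (in_conv_atom m a _ (proj1 (afw_fw_atom t))) Hx ltac:(lra)). lra.
  - pose proof (curvature_bound d m a f grad Cf HCf (x t) (x t) (a (v t)) gam Hx Hx
      (in_conv_atom m a _ (proj1 (afw_away_atom t))) ltac:(lra)). lra.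
Qed.

Lemma fw_gap_ge_subopt t xs : in_conv m a xs ->
  f (x t) - f xs <= - ip d (grad (x t)) (vsub (a (s t)) (x t)).
Proof.
  intros Hxs.
  pose proof (convex_first_order d m a f grad U Ha HUmink Hgrad Hconv (x t) xs (afw_in_conv t) Hxs).
  assert (ip d (grad (x t)) (a (s t)) <= ip d (grad (x t)) xs)
    by (apply ip_conv_ge with m a; auto; apply afw_fw_atom).
  rewrite ip_vsub in *. lra.
Qed.

Lemma afw_vf_exists t : exists vv, is_vf d m a (x t) (grad (x t)) vv /\
  ip d (grad (x t)) vv <= ip d (grad (x t)) (a (v t)).
Proof.
  set (g := grad (x t)).
  pose proof (active_set_in_Sx m a _ _ (afw_weights t)) as HS.
  destruct (afw_away_atom t) as [Hv1 [Hv2 Hv3]].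
  assert (HvS : is_vS d a g (active_set m (alpha t)) (a (v t))).
  { exists (v t). unfold active_set. repeat split.
    - apply Nat.ltb_lt in Hv1. rewrite Hv1. destruct (Rlt_dec 0 _); auto.
    - intros j E. apply andb_prop in E as [Ej E]. apply Nat.ltb_lt in Ej. apply Hv3; auto.
      destruct (Rlt_dec 0 _); [auto|discriminate]. }
  set (Q := fun i => exists S, in_Sx m a (x t) S /\ is_vS d a g S (a i)).
  destruct (exists_argmin_nat m Q (fun i => ip d g (a i))) as [i0 [Hi0 [[S0 [HS0 HvS0]] Hmin]]].
  { exists (v t). split; auto. exists (active_set m (alpha t)). auto. }
  assert (Hvf : is_vf d m a (x t) g (a i0)).
  { exists S0. split; [auto|split; [auto|]]. intros S' w HS' [j [Hj [-> Hjmax]]].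
    apply Hmin; [now apply (proj1 HS')|]. exists S'. split; [exact HS'|exists j; auto]. }
  exists (a i0). split; auto.
  destruct Hvf as [_ [_ [_ Hm']]]. now apply Hm' with (active_set m (alpha t)).
Qed.

(* Geometric strong convexity at [x t] towards a minimizer, with [s_f - v_f] compared to the
   pairwise direction [s_t - v_t], whose gap is at most twice the chosen one. *)
Lemma afw_gap_square_bound t xs mu : in_conv m a xs -> is_inf (mu_set d m a f grad) mu ->
  mu * (f (x t) - f xs) <= 2 * gap t ^ 2.
Proof.
  intros Hxs Hinf.
  pose proof (mu_nonneg d m a f grad U Ha HUmink Hgrad Hconv mu Hinf) as Hmu0.
  pose proof (afw_in_conv t) as HxD.
  destruct (Rlt_le_dec (ip d (grad (x t)) (vsub xs (x t))) 0) as [Hneg|Hpos].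
  2:{ pose proof (convex_first_order d m a f grad U Ha HUmink Hgrad Hconv (x t) xs HxD Hxs).
      assert (0 <= gap t ^ 2) by apply pow2_ge_0.
      assert (f (x t) - f xs <= 0) by lra. nra. }
  destruct (afw_vf_exists t) as [vv [Hvf Hvvle]].
  pose proof (gap_ge_fw_gap t) as G1. pose proof (gap_ge_away_gap t) as G2.
  assert (Hsf : is_sf d m a (grad (x t)) (a (s t)))
    by (exists (s t); split; [|split]; auto; apply afw_fw_atom).
  pose proof Hvf as [S [HS [HvS _]]].
  pose proof (ip_Sx_le d m a _ _ _ _ HS HvS) as B1.
  pose proof (ip_sf_le d m a _ _ _ Hxs Hsf) as B2.
  set (A := - ip d (grad (x t)) (vsub xs (x t))).
  set (B := - ip d (grad (x t)) (vsub (a (s t)) vv)).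
  assert (HAB : A <= B) by (unfold A, B; rewrite !ip_vsub; lra).
  assert (HA : 0 < A) by (unfold A; lra).
  assert (HBG : B <= 2 * gap t) by (unfold B; rewrite ip_vsub in *; lra).
  assert (Hr : mu <= 2 / (A / B) ^ 2 * (f xs - f (x t) - ip d (grad (x t)) (vsub xs (x t)))).
  { apply (proj1 Hinf). exists (x t), xs, (a (s t)), vv. repeat (split; auto). }
  apply quadratic_gap_bound with A B; auto.
  replace (ip d (grad (x t)) (vsub xs (x t))) with (- A) in Hr by (unfold A; ring).
  assert (0 < A ^ 2) by (apply pow_lt; lra).
  assert (mu * A ^ 2 <= (2 / (A / B) ^ 2 * (f xs - f (x t) - - A)) * A ^ 2)
    by (apply Rmult_le_compat_r; lra).
  replace (2 / (A / B) ^ 2 * (f xs - f (x t) - - A) * A ^ 2)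
    with (2 * B ^ 2 * (A - (f (x t) - f xs))) in H0 by (field; lra).
  exact H0.
Qed.

Lemma afw_nondrop_contraction t xs mu : in_conv m a xs ->
  (forall y, in_conv m a y -> f xs <= f y) -> is_inf (mu_set d m a f grad) mu ->
  drop t = false -> f (x (S t)) - f xs <= (1 - mu / (4 * Cf)) * (f (x t) - f xs).
Proof.
  intros Hxs Hmin Hinf Ed.
  apply descent_contraction with (gap t).
  - split; [now apply (mu_nonneg d m a f grad U)|now apply (mu_le_curvature d m a f grad Cf)].
  - pose proof (Hmin _ (afw_in_conv t)). pose proof (fw_gap_ge_subopt t xs Hxs).
    pose proof (gap_ge_fw_gap t). lra.
  - now apply afw_gap_square_bound.
  - intros gam Hgam. pose proof (afw_step_bound t Ed gam Hgam). lra.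
Qed.

Lemma afw_nondrop_descent t xs : in_conv m a xs -> drop t = false ->
  forall gam, 0 <= gam <= 1 ->
  f (x (S t)) - f xs <= (1 - gam) * (f (x t) - f xs) + gam ^ 2 * Cf / 2.
Proof.
  intros Hxs Ed gam Hgam. pose proof (afw_step_bound t Ed gam Hgam).
  pose proof (fw_gap_ge_subopt t xs Hxs). pose proof (gap_ge_fw_gap t).
  assert (gam * (f (x t) - f xs) <= gam * gap t) by (apply Rmult_le_compat_l; lra).
  lra.
Qed.

End AFWRun.

Theorem theorem1 (d m : nat) (a : nat -> vec) (f : vec -> R) (grad : vec -> vec)
  (U : vec -> Prop) (Cf fmin : R)
  (x : nat -> vec) (alpha : nat -> nat -> R) (s v : nat -> nat) (gamma : nat -> R)
  (Hm : (0 < m)%nat)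
  (Ha : forall i, (i < m)%nat -> in_Rd d (a i))
  (Hinj : forall i j, (i < m)%nat -> (j < m)%nat -> a i = a j -> i = j)
  (HU : is_open d U)
  (HUmink : forall y, in_mink m a y -> U y)
  (Hgrad : forall y, U y -> has_grad d f y (grad y))
  (Hconv : convex_on U f)
  (HCf : is_lub (curv_set d m a f grad) Cf)
  (Hmin1 : exists xs, in_conv m a xs /\ f xs = fmin)
  (Hmin2 : forall y, in_conv m a y -> fmin <= f y)
  (Hrun : AFW_run d m a f grad x alpha s v gamma) :
  let h t := f (x t) - fmin in
  let good t := gamma t < gmax d a grad x alpha s v t in
  let ndrop t := countN t (is_drop d a grad x alpha s v gamma) in
  let k t := (t - ndrop t)%nat in
  (* (i), second half *)
  (forall t, h (S t) <= h t) /\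
  (* (ii) *)
  (forall t, (2 * ndrop t <= t)%nat) /\
  (* (i) first half and (iii), whenever mu_f^A is finite *)
  (forall mu, is_inf (mu_set d m a f grad) mu ->
     let rho := mu / (4 * Cf) in
     (forall t, good t -> h (S t) <= (1 - rho) * h t) /\
     (forall t, h t <= h O * exp (- (1/2) * rho * INR t))) /\
  (* (iv) *)
  (forall t, (t <= 2 * k t)%nat /\
     h t <= 4 * (2 * Cf + h O) / (INR (k t) + 4)).
Proof.
  cbv zeta. destruct Hmin1 as [xs [Hxs <-]].
  pose proof (afw_drops_half _ _ _ _ _ _ _ _ _ _ Hrun) as Hhalf.
  set (drop := is_drop d a grad x alpha s v gamma) in *.
  assert (Hh0 : forall t, 0 <= f (x t) - f xs)
    by (intros t; pose proof (Hmin2 _ (afw_in_conv _ _ _ _ _ _ _ _ _ _ Hrun t)); lra).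
  assert (Hmono : forall t, f (x (S t)) - f xs <= f (x t) - f xs)
    by (intros t; pose proof (afw_nonincreasing _ _ _ _ _ _ _ _ _ _ Hrun t); lra).
  pose proof (curvature_nonneg d m a f grad Cf HCf Hm) as HC0.
  split; [exact Hmono|split; [exact Hhalf|split]].
  - intros mu Hinf.
    assert (Hcontr : forall t, drop t = false ->
      f (x (S t)) - f xs <= (1 - mu / (4 * Cf)) * (f (x t) - f xs))
      by (intros; eapply afw_nondrop_contraction; eauto).
    assert (Hrho : 0 <= mu / (4 * Cf) <= 1).
    { pose proof (mu_nonneg d m a f grad U Ha HUmink Hgrad Hconv mu Hinf).
      pose proof (mu_le_curvature d m a f grad Cf HCf mu Hinf).
      destruct (Req_dec Cf 0) as [->|HCn].
      { replace mu with 0 by lra. unfold Rdiv. rewrite Rmult_0_l. lra. }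
      split; [apply Rmult_le_pos; [lra|apply Rinv_nonneg; lra]|].
      apply Rmult_le_reg_r with (4 * Cf); [lra|].
      replace (mu / (4 * Cf) * (4 * Cf)) with mu by (field; lra). lra. }
    split.
    + intros t Hgood. apply Hcontr. destruct (drop t) eqn:E; auto.
      apply drop_step_iff in E as [_ E]. lra.
    + intros t. eapply Rle_trans.
      * apply (geometric_decay_unmarked _ drop Hmono (1 - mu / (4 * Cf))); [lra|exact Hcontr].
      * apply geometric_le_exp; auto. specialize (Hhalf t). lia.
  - intros t. split; [specialize (Hhalf t); lia|].
    apply (sublinear_decay_unmarked (fun t => f (x t) - f xs) drop Hmono Cf HC0 Hh0).
    intros. eapply afw_nondrop_descent; eauto.
Qed.
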